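(* For integers $p\ge1$ and $0\le k\le n$, and all $x$, \[ \sum_{j=0}^{n-k}\binom{n-k}{j}(-1)^{j}E_{j+k}^{(p)}(x)=(-1)^{n+k+1}\sum_{j=0}^{k}\binom{k}{j}E_{n-j}^{(p)}(x)+2(-1)^{n+k}\sum_{j=0}^{k}\binom{k}{j}E_{n-j}^{(p-1)}(x-1). \]
   Context: For $p\ge0$, the higher-order Euler polynomials $E_n^{(p)}(x)$ are defined by $\sum_{n\ge0}E_n^{(p)}(x)\frac{t^n}{n!}=e^{xt}\left(\frac{2}{e^t+1}\right)^p$; in particular $E_n^{(0)}(x)=x^n$. *)

From HB Require Import structures.
From mathcomp Require Import all_boot all_order all_algebra.
Set Implicit Arguments. Unset Strict Implicit. Unset Printing Implicit Defensive.
Import Order.TTheory GRing.Theory Num.Theory.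
Local Open Scope ring_scope.

Definition fps (R : numFieldType) := nat -> R.

Definition fps_mul (R : numFieldType) (f g : fps R) : fps R :=
  fun n => \sum_(i < n.+1) f i * g (n - i)%N.

Definition fps_one (R : numFieldType) : fps R := fun n => (n == 0%N)%:R.

Definition fps_pow (R : numFieldType) (f : fps R) (p : nat) : fps R :=
  iter p (fps_mul f) (@fps_one R).

Definition fps_exp (R : numFieldType) (a : R) : fps R :=
  fun n => a ^+ n / (n`!)%:R.

(* multiplicative inverse of a series with nonzero constant term:
   b_0 = 1/f_0,  b_{n+1} = -(1/f_0) sum_{k=1}^{n+1} f_k b_{n+1-k} *)
Fixpoint fps_inv_aux (R : numFieldType) (f : fps R) (n : nat) : seq R :=
  match n with
  | 0 => [:: (f 0%N)^-1]
  | m.+1 => let s := fps_inv_aux f m in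
      rcons s (- (f 0%N)^-1 * \sum_(k < m.+1) f k.+1 * nth 0 s (m - k)%N)
  end.

Definition fps_inv (R : numFieldType) (f : fps R) : fps R :=
  fun n => nth 0 (fps_inv_aux f n) n.

Definition euler_gf (R : numFieldType) : fps R :=
  fun n => 2 * fps_inv (fun m => fps_exp 1 m + fps_one R m) n.

(* Higher-order Euler polynomial E_n^{(p)}(x):
   sum_n E_n^{(p)}(x) t^n/n! = e^{xt} (2/(e^t+1))^p *)
Definition eulerP (R : numFieldType) (p n : nat) (x : R) : R :=
  (n`!)%:R * fps_mul (fps_exp x) (fps_pow (@euler_gf R) p) n.

From HB Require Import structures.
From mathcomp Require Import all_boot all_order all_algebra.
From mathcomp Require Import ring.
From Stdlib Require Import FunctionalExtensionality.
Import Order.TTheory GRing.Theory Num.Theory.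
Set Implicit Arguments. Unset Strict Implicit. Unset Printing Implicit Defensive.
Local Open Scope ring_scope.

(* The Cauchy product on nat -> R is computed through
      truncated polynomials, which makes it commutative and associative;
      it is linear on the left, the recursive inverse is a right inverse, and
      e^{at} e^{bt} = e^{(a+b)t} follows from a binomial convolution formula.
   2. Two identities for Euler polynomials, read off generating functions:
        E_m^(p)(x+y) = sum_i C(m,i) y^i E_{m-i}^(p)(x)     (e^{(x+y)t} = e^{yt} e^{xt})
        E_m^(p+1)(x+1) + E_m^(p+1)(x) = 2 E_m^(p)(x)      ((e^t+1)(2/(e^t+1)) = 2).
   3. A purely combinatorial fact over any commutative ring: if
      a_n = sum_j C(n,j) b_{n-j}, then
      sum_j C(m,j) (-1)^j a_{j+k} = (-1)^m sum_j C(k,j) b_{k+m-j}.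
   The theorem applies 3 with a = E^(p)(x), b = E^(p)(x-1) (valid by the
   first identity at y = 1) and rewrites the resulting sum with the second. *)

Section PowerSeries.
Variable R : numFieldType.
Implicit Types f g h : fps R.

Definition trunc_poly (N : nat) f : {poly R} := \poly_(i < N) f i.

Lemma coef_trunc_poly n f i : (i <= n)%N -> (trunc_poly n.+1 f)`_i = f i.
Proof. by move=> hi; rewrite coef_poly ltnS hi. Qed.

(* The n-th Cauchy coefficient only sees coefficients up to n, so it is a
   coefficient of any product of polynomials agreeing with f, g up to n. *)
Lemma fps_mul_coef (P Q : {poly R}) f g n :
  (forall i, (i <= n)%N -> P`_i = f i) -> (forall i, (i <= n)%N -> Q`_i = g i) ->
  fps_mul f g n = (P * Q)`_n.
Proof.
move=> Pf Qg; rewrite coefM; apply: eq_bigr => i _.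
by rewrite Pf -1?ltnS // Qg // leq_subr.
Qed.

Lemma trunc_polyM n f g i : (i <= n)%N ->
  (trunc_poly n.+1 f * trunc_poly n.+1 g)`_i = fps_mul f g i.
Proof.
move=> hin; symmetry; apply: fps_mul_coef => j hji;
  by rewrite coef_trunc_poly // (leq_trans hji).
Qed.

Lemma fps_mulC f g : fps_mul f g = fps_mul g f.
Proof.
apply: functional_extensionality => n.
by rewrite -!(trunc_polyM _ _ (leqnn n)) mulrC.
Qed.

Lemma fps_mulA f g h : fps_mul f (fps_mul g h) = fps_mul (fps_mul f g) h.
Proof.
apply: functional_extensionality => n.
rewrite (@fps_mul_coef (trunc_poly n.+1 f) (trunc_poly n.+1 g * trunc_poly n.+1 h));
  [|exact: coef_trunc_poly|exact: trunc_polyM].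
rewrite (@fps_mul_coef (trunc_poly n.+1 f * trunc_poly n.+1 g) (trunc_poly n.+1 h));
  [|exact: trunc_polyM|exact: coef_trunc_poly].
by rewrite mulrA.
Qed.

Lemma fps_mul1 f n : fps_mul (@fps_one R) f n = f n.
Proof.
rewrite /fps_mul big_ord_recl big1 ?addr0; first by rewrite mul1r subn0.
by move=> i _; rewrite /fps_one lift0 /= mul0r.
Qed.

Lemma fps_mulDl f g h n :
  fps_mul (fun m => f m + g m) h n = fps_mul f h n + fps_mul g h n.
Proof. by rewrite /fps_mul -big_split; apply: eq_bigr => i _; rewrite mulrDl. Qed.

Lemma fps_mulZl (c : R) f h n :
  fps_mul (fun m => c * f m) h n = c * fps_mul f h n.
Proof. by rewrite /fps_mul mulr_sumr; apply: eq_bigr => i _; rewrite mulrA. Qed.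

Lemma size_fps_inv_aux f n : size (fps_inv_aux f n) = n.+1.
Proof. by elim: n => //= n IH; rewrite size_rcons IH. Qed.

Lemma fps_inv_nth f n j : (j <= n)%N -> fps_inv f j = nth 0 (fps_inv_aux f n) j.
Proof.
move=> hjn; rewrite /fps_inv -(subnKC hjn).
elim: (n - j)%N => [|m IH]; first by rewrite addn0.
by rewrite addnS /= nth_rcons size_fps_inv_aux ltnS leq_addr.
Qed.

Lemma fps_mul_inv f : f 0%N != 0 -> fps_mul f (fps_inv f) = @fps_one R.
Proof.
move=> f0; apply: functional_extensionality => -[|m].
  by rewrite /fps_mul big_ord1 /fps_inv /= divff.
have inv_last : fps_inv f m.+1 = - (f 0%N)^-1 *
    \sum_(k < m.+1) f k.+1 * nth 0 (fps_inv_aux f m) (m - k)%N.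
  by rewrite /fps_inv /= nth_rcons size_fps_inv_aux ltnn eqxx.
rewrite /fps_mul big_ord_recl subn0.
under eq_bigr => i _ do rewrite lift0 subSS (fps_inv_nth _ (leq_subr i m)).
by rewrite inv_last mulrA mulrN divff // mulN1r addNr.
Qed.

Lemma fact_neq0 n : (n`!%:R : R) != 0.
Proof. by rewrite pnatr_eq0 -lt0n fact_gt0. Qed.

Lemma fps_mul_exp_coef (y : R) f n :
  n`!%:R * fps_mul (fps_exp y) f n =
  \sum_(i < n.+1) 'C(n, i)%:R * y ^+ i * ((n - i)`!%:R * f (n - i)%N).
Proof.
rewrite /fps_mul mulr_sumr; apply: eq_bigr => i _.
have hin : (i <= n)%N by rewrite -ltnS.
rewrite /fps_exp -(bin_fact hin) !natrM.
by field; rewrite !fact_neq0.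
Qed.

Lemma fps_exp_add (a b : R) : fps_mul (fps_exp a) (fps_exp b) = fps_exp (a + b).
Proof.
apply: functional_extensionality => n.
apply: (mulfI (fact_neq0 n)).
rewrite fps_mul_exp_coef /fps_exp mulrCA divff ?fact_neq0 // mulr1.
rewrite addrC exprDn; apply: eq_bigr => i _.
by rewrite [_ * (_ / _)]mulrC divfK ?fact_neq0 // -mulr_natl; ring.
Qed.

End PowerSeries.

Section EulerPolynomials.
Variable R : numFieldType.

Lemma euler_gf_recip :
  fps_mul (fun m => fps_exp 1 m + fps_one R m) (euler_gf R) =
  fun m => 2 * fps_one R m.
Proof.
rewrite fps_mulC; apply: functional_extensionality => m.
rewrite fps_mulZl fps_mulC fps_mul_inv //.
by rewrite /fps_exp /fps_one /= expr0 divr1 -(natrD _ 1 1) pnatr_eq0.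
Qed.

Lemma eulerP_shift (p m : nat) (x y : R) :
  eulerP p m (x + y) =
  \sum_(i < m.+1) 'C(m, i)%:R * y ^+ i * eulerP p (m - i) x.
Proof.
by rewrite /eulerP addrC -fps_exp_add -fps_mulA fps_mul_exp_coef.
Qed.

Lemma eulerP_step (p m : nat) (x : R) :
  eulerP p.+1 m (x + 1) + eulerP p.+1 m x = 2 * eulerP p m x.
Proof.
rewrite /eulerP mulrCA -mulrDr; congr (_ * _).
set g := euler_gf R.
have pull_g z : fps_mul (fps_exp z) (fps_pow g p.+1) =
    fps_mul g (fps_mul (fps_exp z) (fps_pow g p)).
  by rewrite [fps_pow g p.+1]/= fps_mulA (fps_mulC (fps_exp z)) -fps_mulA.
rewrite !pull_g (addrC x) -fps_exp_add -(fps_mulA (fps_exp 1)).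
rewrite (fps_mulA g) (fps_mulC g (fps_exp 1)) -fps_mulA.
rewrite -[X in _ + X = _]fps_mul1 -fps_mulDl fps_mulA euler_gf_recip.
by rewrite fps_mulZl fps_mul1.
Qed.

End EulerPolynomials.

Section BinomialSums.
Variable R : comPzRingType.

(* sum_{j<=m} C(m,j) (-1)^j a_{j+k}, i.e. (-1)^m times the m-th forward
   difference of a at k. *)
Definition alt_binom_sum (a : nat -> R) (m k : nat) : R :=
  \sum_(j < m.+1) 'C(m, j)%:R * (-1) ^+ j * a (j + k)%N.

Definition binom_sum (c : nat -> R) (k N : nat) : R :=
  \sum_(j < k.+1) 'C(k, j)%:R * c (N - j)%N.

Lemma alt_binom_sumS a m k :
  alt_binom_sum a m.+1 k = alt_binom_sum a m k - alt_binom_sum a m k.+1.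
Proof.
rewrite /alt_binom_sum big_ord_recl [in X in _ = X - _]big_ord_recl.
under eq_bigr => i _ do rewrite lift0 binS natrD !mulrDl.
rewrite big_split /= !bin0 big_ord_recr /= bin_small // !mul0r addr0 addrA.
congr (_ + _); rewrite -sumrN; apply: eq_bigr => i _.
by rewrite exprS addSnnS mulN1r mulrN mulNr.
Qed.

Lemma binom_sumS c k N :
  binom_sum c k.+1 N.+1 = binom_sum c k N + binom_sum c k N.+1.
Proof.
rewrite /binom_sum big_ord_recl [in X in _ = _ + X]big_ord_recl.
under eq_bigr => i _ do rewrite lift0 binS natrD !mulrDl subSS.
rewrite big_split /= !bin0 !subn0 big_ord_recr /= bin_small // mul0r addr0.
by rewrite [RHS]addrC -addrA.
Qed.

Lemma alt_binom_sum_transform (a b : nat -> R) :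
  (forall n, a n = binom_sum b n n) ->
  forall m k, alt_binom_sum a m k = (-1) ^+ m * binom_sum b k (k + m).
Proof.
move=> ab; elim=> [|m IH] k.
  by rewrite /alt_binom_sum big_ord1 bin0 expr0 !mul1r add0n addn0 ab.
rewrite alt_binom_sumS !IH addSn binom_sumS addnS exprS.
ring.
Qed.

End BinomialSums.

Unset Implicit Arguments.

Theorem mainTheorem10 (R : numFieldType) (p n k : nat) (x : R) :
  (1 <= p)%N -> (k <= n)%N ->
  \sum_(j < (n - k).+1) ('C(n - k, j))%:R * (-1) ^+ j * eulerP p (j + k) x =
  (-1) ^+ (n + k + 1) * \sum_(j < k.+1) ('C(k, j))%:R * eulerP p (n - j) x
  + 2 * (-1) ^+ (n + k) * \sum_(j < k.+1) ('C(k, j))%:R * eulerP (p - 1) (n - j) (x - 1).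
Proof.
case: p => [//|q] _ hkn; rewrite subSS subn0.
have transform : forall m, eulerP q.+1 m x =
    binom_sum (fun j => eulerP q.+1 j (x - 1)) m m.
  move=> m; rewrite -{1}(subrK 1 x) eulerP_shift.
  by apply: eq_bigr => i _; rewrite expr1n mulr1.
have lower_order : 2 * binom_sum (fun j => eulerP q j (x - 1)) k n =
    binom_sum (fun j => eulerP q.+1 j x) k n
    + binom_sum (fun j => eulerP q.+1 j (x - 1)) k n.
  rewrite /binom_sum mulr_sumr -big_split; apply: eq_bigr => i _.
  by rewrite mulrCA -eulerP_step subrK mulrDr.
have sign : (-1) ^+ (n + k) = (-1) ^+ (n - k) :> R.
  by rewrite -{1}(subnK hkn) -addnA exprD addnn -mul2n exprM sqrrN !expr1n mulr1.
have := alt_binom_sum_transform transform (n - k) k.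
rewrite subnKC // /alt_binom_sum => ->.
rewrite -[\sum_(j < k.+1) _ * eulerP q _ _]/(binom_sum (fun j => eulerP q j (x - 1)) k n).
rewrite -[\sum_(j < k.+1) _ * eulerP q.+1 _ x]/(binom_sum (fun j => eulerP q.+1 j x) k n).
rewrite (mulrC 2) -mulrA lower_order addn1 exprS sign.
ring.
Qed.
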